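(* Let $\mathcal{G}\in\Gamma_N$ with eigenvalues $1,\lambda_2,\dots,\lambda_N$ of $\mathcal{D}$ ($|\lambda_i|<1$ for $i\ge2$), and let $h_1,\dots,h_N\in\mathbf{R}^n$ be a formation. If $A+BK$ and $A+(1-\lambda_i)LC$, $i=2,\dots,N$, are Schur stable and $(A-I)(h_i-h_j)=0$ for all $i,j$, then under the formation protocol, for every initial condition, $\|x_i(k)-h_i-x_j(k)+h_j\|\to0$ as $k\to\infty$ for all $i,j=1,\dots,N$.
   Context: Agents: $x_i(k+1)=Ax_i(k)+Bu_i(k)$, $y_i=Cx_i$, $i=1,\dots,N$, with $A\in\mathbf{R}^{n\times n}$, $B\in\mathbf{R}^{n\times p}$, $C\in\mathbf{R}^{q\times n}$. For a directed graph $\mathcal{G}$ on $\{1,\dots,N\}$, its row-stochastic matrix $\mathcal{D}=(d_{ij})$ has $d_{ii}>0$, $d_{ij}>0$ ($j\ne i$) iff $(j,i)$ is an edge, $0$ otherwise, row sums $1$; $\Gamma_N$ is the set of such graphs containing a directed spanning tree. Formation protocol with $K\in\mathbf{R}^{p\times n}$, $L\in\mathbf{R}^{n\times q}$: $\tilde\zeta_i=\sum_jd_{ij}\big(y_i-y_j-C(h_i-h_j)\big)$, $v_i(k+1)=(A+BK)v_i+L\big(\sum_jd_{ij}C(v_i-v_j)-\tilde\zeta_i\big)$, $u_i=Kv_i$, $v_i\in\mathbf{R}^n$. Schur stable: all eigenvalues of modulus $<1$. *)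

(* The ambient field is an arbitrary Archimedean algebraically
   closed numeric field [F] (e.g. the complex numbers); "real" objects are
   those with all entries in [Num.real]. *)
From HB Require Import structures.
From mathcomp Require Import all_boot all_order all_algebra.
Set Implicit Arguments. Unset Strict Implicit. Unset Printing Implicit Defensive.
Import Order.TTheory GRing.Theory Num.Theory.
Local Open Scope ring_scope.

Definition real_mx (F : numClosedFieldType) m n (M : 'M[F]_(m, n)) : Prop :=
  forall i j, M i j \is Num.real.

Definition schur_stable (F : numClosedFieldType) n (M : 'M[F]_n) : Prop :=
  forall lam : F, eigenvalue M lam -> `|lam| < 1.

Definition vnorm (F : numClosedFieldType) n (v : 'cV[F]_n) : F :=
  sqrtC (\sum_(i < n) `|v i 0| ^+ 2).

Definition tends_to_0 (F : numClosedFieldType) (u : nat -> F) : Prop :=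
  forall eps : F, 0 < eps -> exists K : nat, forall k : nat, (K <= k)%N -> `|u k| < eps.

(* D is the row-stochastic matrix of a directed graph on {1..N}:
   d_ii > 0, d_ij >= 0 (d_ij > 0 iff (j,i) is an edge), row sums 1, real entries *)
Definition row_stochastic_graph_mx (F : numClosedFieldType) N (D : 'M[F]_N) : Prop :=
  real_mx D /\ (forall i, 0 < D i i) /\ (forall i j, 0 <= D i j)
  /\ (forall i, \sum_(j < N) D i j = 1).

Definition graph_edge (F : numClosedFieldType) N (D : 'M[F]_N) : rel 'I_N :=
  fun j i => (j != i) && (0 < D i j).

Definition has_spanning_tree (F : numClosedFieldType) N (D : 'M[F]_N) : Prop :=
  exists r : 'I_N, forall i : 'I_N, connect (graph_edge D) r i.

Definition in_Gamma (F : numClosedFieldType) N (D : 'M[F]_N) : Prop :=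
  row_stochastic_graph_mx D /\ has_spanning_tree D.

(* With the tracking errors t_i = x_i - h_i and observer errors e_i = v_i - t_i,
   the protocol gives  t_i(k+1) = (A+BK) t_i + BK e_i + (A-I) h_i  and
   e_i(k+1) = A e_i + LC sum_j (I - D^T)_ji e_j - (A-I) h_i.  Stacking the agents
   as columns and passing to disagreement coordinates (differences to the last
   agent) removes the drift (A-I) h_i and leaves the autonomous recursions
       Z(k+1) = A Z + LC Z J,        X(k+1) = (A+BK) X + BK Z,
   where J is I - D^T restricted to zero-sum vectors.  Every eigenvalue mu of J
   yields an eigenvalue 1 - mu <> 1 of D (spanning-tree argument), so after a
   Schur triangularization of J the first recursion is a cascade of stable
   systems and Z -> 0; then X -> 0 since A + BK is Schur stable.  Stability of
   driven Schur stable recursions rests on a weighted 1-norm in which the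
   matrix is a strict contraction. *)

From HB Require Import structures.
From mathcomp Require Import all_boot all_order all_algebra ring.
Import Order.TTheory GRing.Theory Num.Theory.
Local Open Scope ring_scope.
Set Implicit Arguments. Unset Strict Implicit. Unset Printing Implicit Defensive.

Section NullSequences.
Variable F : archiClosedFieldType.
Implicit Types (a b : nat -> F).

Lemma tends_to_0_ext a b : (forall k, a k = b k) -> tends_to_0 a -> tends_to_0 b.
Proof. by move=> eab ha eps /ha[K hK]; exists K => k /hK; rewrite eab. Qed.

Lemma tends_to_0_le a b :
  (forall k, `|a k| <= `|b k|) -> tends_to_0 b -> tends_to_0 a.
Proof. by move=> hab hb eps /hb[K hK]; exists K => k /hK; apply: le_lt_trans. Qed.

Lemma tends_to_0_add a b :
  tends_to_0 a -> tends_to_0 b -> tends_to_0 (fun k => a k + b k).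
Proof.
move=> ha hb eps eps_gt0; have eps2_gt0 : 0 < eps / 2 by rewrite divr_gt0.
have [K1 h1] := ha _ eps2_gt0; have [K2 h2] := hb _ eps2_gt0.
exists (maxn K1 K2) => k; rewrite geq_max => /andP[k1 k2].
by apply: le_lt_trans (ler_normD _ _) _; rewrite [eps]splitr ltrD ?h1 ?h2.
Qed.

Lemma tends_to_0_scale (c : F) a : tends_to_0 a -> tends_to_0 (fun k => c * a k).
Proof.
move=> ha eps eps_gt0; have [->|c_neq0] := eqVneq c 0.
  by exists 0%N => k _; rewrite mul0r normr0.
have epsc_gt0 : 0 < eps / `|c| by rewrite divr_gt0 ?normr_gt0.
have [K hK] := ha _ epsc_gt0.
by exists K => k hk; rewrite normrM mulrC -ltr_pdivlMr ?normr_gt0 ?hK.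
Qed.

Lemma tends_to_0_sum (I : Type) (s : seq I) (P : pred I) (a : I -> nat -> F) :
  (forall i, P i -> tends_to_0 (a i)) ->
  tends_to_0 (fun k => \sum_(i <- s | P i) a i k).
Proof.
move=> ha; elim: s => [|i s IH].
  by move=> eps eps_gt0; exists 0%N => k _; rewrite big_nil normr0.
case Pi: (P i); last by apply: tends_to_0_ext IH => k; rewrite big_cons Pi.
by apply: tends_to_0_ext (tends_to_0_add (ha i Pi) IH) => k; rewrite big_cons Pi.
Qed.

Lemma bernoulli_ineq (t : F) (j : nat) : 0 <= t -> 1 + j%:R * t <= (1 + t) ^+ j.
Proof.
move=> t_ge0; elim: j => [|j IH]; first by rewrite mul0r addr0 expr0.
apply: le_trans (_ : (1 + j%:R * t) * (1 + t) <= _); last first.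
  by rewrite exprSr ler_wpM2r // addr_ge0.
have -> : (1 + j%:R * t) * (1 + t) = 1 + j.+1%:R * t + j%:R * t * t.
  by rewrite -natr1; ring.
by rewrite lerDl !mulr_ge0.
Qed.

Lemma expr_small (rho d : F) :
  0 <= rho -> rho < 1 -> 0 < d -> exists J, rho ^+ J < d.
Proof.
move=> rho_ge0 rho_lt1 d_gt0; have [->|rho_neq0] := eqVneq rho 0.
  by exists 1%N; rewrite expr1.
have rho_gt0 : 0 < rho by rewrite lt_def rho_neq0.
pose t := rho^-1 - 1; have t_gt0 : 0 < t by rewrite subr_gt0 invf_gt1.
have rhoE : rho = (1 + t)^-1 by rewrite /t addrC subrK invrK.
have dt_gt0 : 0 < d * t by rewrite mulr_gt0.
set J := Num.Def.archi_bound (d * t)^-1.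
have hJ : (d * t)^-1 < J%:R by apply: archi_boundP; rewrite invr_ge0 ltW.
have Jt_gt0 : 0 < J%:R * t by rewrite mulr_gt0 // (le_lt_trans _ hJ) ?invr_ge0 ?ltW.
have t1_gt0 : 0 < 1 + t by rewrite addr_gt0.
exists J; rewrite rhoE exprVn; apply: (@le_lt_trans _ _ (J%:R * t)^-1).
  rewrite lef_pV2 ?posrE ?exprn_gt0 //.
  by apply: le_trans (bernoulli_ineq J (ltW t_gt0)); rewrite lerDr.
by rewrite -[X in _ < X]invrK ltf_pV2 ?posrE ?invr_gt0 // -ltr_pdivrMr // -invfM.
Qed.

Lemma tends_to_0_contraction (a b : nat -> F) (rho : F) :
  (forall k, 0 <= a k) -> (forall k, 0 <= b k) -> 0 <= rho -> rho < 1 ->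
  (forall k, a k.+1 <= rho * a k + b k) -> tends_to_0 b -> tends_to_0 a.
Proof.
move=> a_ge0 b_ge0 rho_ge0 rho_lt1 rec hb eps eps_gt0.
have d_gt0 : 0 < eps * (1 - rho) / 2 by rewrite !mulr_gt0 ?subr_gt0 ?invr_gt0.
have [K0 hK0] := hb _ d_gt0.
have after_K0 j : a (K0 + j)%N <= rho ^+ j * a K0 + eps / 2.
  elim: j => [|j IH]; first by rewrite addn0 expr0 mul1r lerDl divr_ge0 ?ltW.
  have hbj : b (K0 + j)%N <= eps * (1 - rho) / 2.
    by apply: le_trans (ltW (hK0 _ (leq_addr _ _))); rewrite ger0_norm.
  have -> : rho ^+ j.+1 * a K0 + eps / 2
      = rho * (rho ^+ j * a K0 + eps / 2) + eps * (1 - rho) / 2 by rewrite exprS; ring.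
  by rewrite addnS (le_trans (rec _)) // lerD // ler_wpM2l.
have r_gt0 : 0 < eps / 2 / (a K0 + 1) by rewrite !divr_gt0 ?ltr_wpDl.
have [J hJ] := expr_small rho_ge0 rho_lt1 r_gt0.
exists (K0 + J)%N => k kK; rewrite -(subnKC (leq_trans (leq_addr J K0) kK)).
rewrite ger0_norm //; apply: le_lt_trans (after_K0 _) _.
rewrite [X in _ < X](splitr eps) ltrD2r.
apply: (@le_lt_trans _ _ (rho ^+ J * (a K0 + 1))).
  apply: ler_pM; rewrite ?exprn_ge0 ?lerDl //.
  apply: ler_wiXn2l => //; first exact: ltW.
  by rewrite leq_subRL ?(leq_trans (leq_addr J K0) kK) // addnC.
by rewrite -ltr_pdivlMr ?ltr_wpDl.
Qed.

End NullSequences.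

Section WeightedNorm.
Variable F : archiClosedFieldType.

Definition nrm1 m s (Y : 'M[F]_(m, s)) : F := \sum_c \sum_i `|Y i c|.

Lemma nrm1_ge0 m s (Y : 'M[F]_(m, s)) : 0 <= nrm1 Y.
Proof. by apply: sumr_ge0 => c _; apply: sumr_ge0. Qed.

Lemma nrm1D m s (Y Z : 'M[F]_(m, s)) : nrm1 (Y + Z) <= nrm1 Y + nrm1 Z.
Proof.
rewrite /nrm1 -big_split; apply: ler_sum => c _; rewrite -big_split.
by apply: ler_sum => i _; rewrite mxE ler_normD.
Qed.

Lemma entry_le_nrm1 m s (Y : 'M[F]_(m, s)) i c : `|Y i c| <= nrm1 Y.
Proof.
rewrite /nrm1 (bigD1 c) //= (bigD1 i) //= -addrA lerDl.
by rewrite addr_ge0 ?sumr_ge0 // => *; rewrite sumr_ge0.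
Qed.

Lemma nrm1_mul_le m s (T : 'M[F]_m) (rho : F) (Y : 'M[F]_(m, s)) :
  (forall j, \sum_i `|T i j| <= rho) -> nrm1 (T *m Y) <= rho * nrm1 Y.
Proof.
move=> colsum; rewrite /nrm1 mulr_sumr; apply: ler_sum => c _.
apply: le_trans (_ : \sum_i \sum_j `|T i j| * `|Y j c| <= _).
  apply: ler_sum => i _; rewrite mxE; apply: le_trans (ler_norm_sum _ _ _) _.
  by apply: ler_sum => j _; rewrite normrM.
by rewrite exchange_big mulr_sumr; apply: ler_sum => j _; rewrite -mulr_suml ler_wpM2r.
Qed.

Lemma trig_diag_eigenvalue n (M P : 'M[F]_n) :
  P \in unitmx -> is_trig_mx (conjmx P M) -> forall j, eigenvalue M (conjmx P M j j).
Proof.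
move=> P_unit T_trig j.
have eigT : eigenvalue (conjmx P M) (conjmx P M j j).
  rewrite eigenvalue_root_char char_poly_trig // /root horner_prod.
  by rewrite (bigD1 j) //= hornerXsubC subrr mul0r.
by apply: (eigenvalue_conjmx (stablemx_unit _ P_unit)); rewrite ?row_free_unit.
Qed.

(* the diagonal weights e^i, 0 < e <= 1, shrink the strictly lower part of a
   lower triangular matrix by a factor e *)
Definition geom_diag n (e : F) : 'M[F]_n := diag_mx (\row_(i < n) e ^+ i).

Lemma geom_diagV n (e : F) : e != 0 -> geom_diag n e^-1 *m geom_diag n e = 1%:M.
Proof.
move=> e_neq0; apply/matrixP => i j; rewrite mul_diag_mx !mxE.
case: eqP => [->|_]; last by rewrite !mulr0n mulr0.
by rewrite !mulr1n -exprMn mulVf // expr1n.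
Qed.

Lemma scaled_trig_colsum n (T : 'M[F]_n) (e : F) j :
  is_trig_mx T -> 0 < e <= 1 ->
  \sum_i `|(geom_diag n e *m T *m geom_diag n e^-1) i j|
    <= `|T j j| + e * \sum_j' \sum_i `|T i j'|.
Proof.
move=> /is_trig_mxP T_trig /andP[e_gt0 e_le1]; have e_neq0 : e != 0 by rewrite gt_eqF.
have TeE i : (geom_diag n e *m T *m geom_diag n e^-1) i j = e ^+ i * T i j * e^-1 ^+ j.
  by rewrite mul_mx_diag mul_diag_mx !mxE.
rewrite (bigD1 j) //= TeE mulrAC -exprMn mulfV // expr1n mul1r lerD2l.
apply: le_trans (_ : \sum_(i | i != j) e * `|T i j| <= _); last first.
  rewrite -mulr_sumr ler_wpM2l ?(ltW e_gt0) //.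
  apply: le_trans (_ : \sum_i `|T i j| <= _); first by rewrite [X in _ <= X](bigD1 j) //= lerDr.
  by rewrite [X in _ <= X](bigD1 j) //= lerDl sumr_ge0 // => j' _; apply: sumr_ge0.
apply: ler_sum => i i_neq_j; rewrite TeE.
case: (ltngtP i j) => [i_lt_j | j_lt_i | /val_inj i_eq_j].
- by rewrite T_trig // mulr0 mul0r !normr0 mulr0.
- have weightE : e ^+ i * e^-1 ^+ j = e ^+ (i - j).
    by rewrite -{1}(subnK (ltnW j_lt_i)) exprD -mulrA -exprMn mulfV // expr1n mulr1.
  rewrite mulrAC weightE normrM ger0_norm ?exprn_ge0 ?(ltW e_gt0) // ler_wpM2r //.
  rewrite -(prednK (_ : 0 < i - j)%N) ?subn_gt0 // exprS ler_piMr ?(ltW e_gt0) //.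
  by rewrite exprn_ile1 ?(ltW e_gt0).
- by rewrite i_eq_j eqxx in i_neq_j.
Qed.

Lemma trig_contraction_weights n (T : 'M[F]_n) :
  is_trig_mx T -> (forall j, `|T j j| < 1) ->
  exists G : 'M[F]_n, exists rho : F, [/\ G \in unitmx, 0 <= rho, rho < 1 &
    forall j, \sum_i `|(G *m T *m invmx G) i j| <= rho].
Proof.
move=> T_trig T_diag.
pose pi := \prod_i (1 - `|T i i|).
have gap_le1 i : 0 <= 1 - `|T i i| <= 1 by rewrite subr_ge0 ltW //= gerBl.
have pi_gt0 : 0 < pi by apply: prodr_gt0 => i _; rewrite subr_gt0.
have pi_le1 : pi <= 1 by apply: prodr_ile1.
have pi_le_gap j : pi <= 1 - `|T j j|.
  rewrite /pi (bigD1 j) //= -[X in _ <= X]mulr1 ler_pM2l ?subr_gt0 //.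
  exact: prodr_ile1.
pose s := \sum_j \sum_i `|T i j|.
have s_ge0 : 0 <= s by apply: sumr_ge0 => j _; apply: sumr_ge0.
pose e := pi / (2 * (1 + s)).
have s1_gt0 : 0 < 2 * (1 + s) by rewrite mulr_gt0 // ltr_wpDr.
have e_gt0 : 0 < e by rewrite divr_gt0.
have e_neq0 : e != 0 by rewrite gt_eqF.
have e_le1 : e <= 1.
  rewrite ler_pdivrMr // mul1r (le_trans pi_le1) //.
  by rewrite mulrDr mulr1 ler_wpDr ?mulr_ge0 // ler1n.
have es_le : e * s <= pi / 2.
  rewrite /e mulrAC ler_pdivrMr // -mulrA ler_pM2l // mulrA mulVf ?pnatr_eq0 //.
  by rewrite mul1r lerDr.
have G_invE : invmx (geom_diag n e) = geom_diag n e^-1.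
  have GV := geom_diagV n e_neq0.
  have G_unit : geom_diag n e \in unitmx by case/mulmx1_unit: GV.
  by rewrite -[LHS]mul1mx -GV -mulmxA mulmxV // mulmx1.
exists (geom_diag n e), (1 - pi / 2); split.
- by case/mulmx1_unit: (geom_diagV n e_neq0).
- by rewrite subr_ge0 ler_pdivrMr // mul1r (le_trans pi_le1) // ler1n.
- by rewrite gtrBl divr_gt0.
move=> j; rewrite G_invE; apply: le_trans (scaled_trig_colsum j T_trig _) _.
  by rewrite e_gt0 e_le1.
have -> : 1 - pi / 2 = 1 - pi + pi / 2 by field.
by rewrite lerD // lerBrDr addrC -lerBrDr.
Qed.

Lemma schur_contraction n (M : 'M[F]_n) : schur_stable M ->
  exists S : 'M[F]_n, exists rho : F, [/\ S \in unitmx, 0 <= rho, rho < 1 &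
    forall s (Y : 'M[F]_(n, s)), nrm1 (S *m (M *m Y)) <= rho * nrm1 (S *m Y)].
Proof.
case: n M => [|n] M M_stable.
  exists 1%:M, 0; split; rewrite ?unitmx1 // => s Y.
  by rewrite /nrm1 mul0r big1 // => c _; rewrite big_ord0.
have [P P_unitary T_trig] := Schur M (ltn0Sn n).
have P_unit : P \in unitmx by apply: unitarymx_unit.
have T_diag j : `|conjmx P M j j| < 1 by apply/M_stable/trig_diag_eigenvalue.
have [G [rho [G_unit rho_ge0 rho_lt1 colsum]]] := trig_contraction_weights T_trig T_diag.
exists (G *m P), rho; split; rewrite ?unitmx_mul ?G_unit // => s Y.
have -> : G *m P *m (M *m Y) = G *m conjmx P M *m invmx G *m (G *m P *m Y).
  by rewrite conjumx // !mulmxA mulmxKV // mulmxKV.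
by rewrite nrm1_mul_le.
Qed.

End WeightedNorm.

Section MatrixNullSequences.
Variable F : archiClosedFieldType.

Definition mx_tends_to_0 m s (Y : nat -> 'M[F]_(m, s)) : Prop :=
  forall a b, tends_to_0 (fun k => Y k a b).

Lemma mx_tends_to_0_ext m s (Y Z : nat -> 'M[F]_(m, s)) :
  (forall k, Y k = Z k) -> mx_tends_to_0 Y -> mx_tends_to_0 Z.
Proof. by move=> eYZ hY a b; apply: tends_to_0_ext (hY a b) => k; rewrite eYZ. Qed.

Lemma mx_tends_to_0_mull r m s (M : 'M[F]_(r, m)) (Y : nat -> 'M[F]_(m, s)) :
  mx_tends_to_0 Y -> mx_tends_to_0 (fun k => M *m Y k).
Proof.
move=> hY a b; apply: tends_to_0_ext (tends_to_0_sum (index_enum _) (P := xpredT)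
  (a := fun j k => M a j * Y k j b) (fun j _ => tends_to_0_scale _ (hY j b))).
by move=> k; rewrite mxE.
Qed.

Lemma mx_tends_to_0_mulr m s r (Y : nat -> 'M[F]_(m, s)) (M : 'M[F]_(s, r)) :
  mx_tends_to_0 Y -> mx_tends_to_0 (fun k => Y k *m M).
Proof.
move=> hY a b; apply: tends_to_0_ext (tends_to_0_sum (index_enum _) (P := xpredT)
  (a := fun j k => M j b * Y k a j) (fun j _ => tends_to_0_scale _ (hY a j))).
by move=> k; rewrite mxE; apply: eq_bigr => j _; rewrite mulrC.
Qed.

Lemma mx_tends_to_0_cols m s (Y : nat -> 'M[F]_(m, s)) :
  (forall c, mx_tends_to_0 (fun k => col c (Y k))) -> mx_tends_to_0 Y.
Proof. by move=> hY a b; apply: tends_to_0_ext (hY b a 0) => k; rewrite mxE. Qed.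

Lemma mx_tends_to_0_nrm1 m s (Y : nat -> 'M[F]_(m, s)) :
  mx_tends_to_0 Y -> tends_to_0 (fun k => nrm1 (Y k)).
Proof.
move=> hY; apply: tends_to_0_sum => c _; apply: tends_to_0_sum => i _.
by apply: tends_to_0_le (hY i c) => k; rewrite normr_id.
Qed.

Lemma nrm1_mx_tends_to_0 m s (Y : nat -> 'M[F]_(m, s)) :
  tends_to_0 (fun k => nrm1 (Y k)) -> mx_tends_to_0 Y.
Proof.
move=> hY a b; apply: tends_to_0_le hY => k.
by rewrite [X in _ <= X]ger0_norm ?nrm1_ge0 ?entry_le_nrm1.
Qed.

Lemma stable_input n s (M : 'M[F]_n) (Y U : nat -> 'M[F]_(n, s)) :
  schur_stable M -> (forall k, Y k.+1 = M *m Y k + U k) ->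
  mx_tends_to_0 U -> mx_tends_to_0 Y.
Proof.
move=> M_stable rec hU.
have [S [rho [S_unit rho_ge0 rho_lt1 contract]]] := schur_contraction M_stable.
suff hSY : mx_tends_to_0 (fun k => S *m Y k).
  by apply: mx_tends_to_0_ext (mx_tends_to_0_mull (invmx S) hSY) => k; rewrite mulKmx.
apply: nrm1_mx_tends_to_0.
apply: (tends_to_0_contraction (b := fun k => nrm1 (S *m U k)) _ _ rho_ge0 rho_lt1).
- by move=> k; apply: nrm1_ge0.
- by move=> k; apply: nrm1_ge0.
- by move=> k; rewrite rec mulmxDr (le_trans (nrm1D _ _)) // lerD2r contract.
- exact/mx_tends_to_0_nrm1/mx_tends_to_0_mull.
Qed.

Lemma vnorm_le_nrm1 n (z : 'cV[F]_n) : vnorm z <= nrm1 z.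
Proof.
rewrite /vnorm /nrm1 big_ord1.
set t := \sum_r `|z r 0|; have t_ge0 : 0 <= t by apply: sumr_ge0.
rewrite -(sqrCK t_ge0) ler_sqrtC ?nnegrE ?sumr_ge0 ?exprn_ge0 // => [|r _].
  rewrite expr2 mulr_suml; apply: ler_sum => r _; rewrite expr2 ler_wpM2l //.
  by rewrite /t (bigD1 r) //= lerDl sumr_ge0.
by rewrite exprn_ge0.
Qed.

Lemma tends_to_0_vnorm n (z : nat -> 'cV[F]_n) :
  mx_tends_to_0 z -> tends_to_0 (fun k => vnorm (z k)).
Proof.
move=> hz; apply: tends_to_0_le (mx_tends_to_0_nrm1 hz) => k.
by rewrite !ger0_norm ?nrm1_ge0 ?vnorm_le_nrm1 // sqrtC_ge0 sumr_ge0 // => r _; rewrite exprn_ge0.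
Qed.

End MatrixNullSequences.

Section TriangularCascade.
Variable F : archiClosedFieldType.

Lemma col_mull m n s (M : 'M[F]_(m, n)) (Y : 'M[F]_(n, s)) c :
  col c (M *m Y) = M *m col c Y.
Proof. by rewrite !colE mulmxA. Qed.

Lemma col_mul_trig n m (Y : 'M[F]_(n, m)) (T : 'M[F]_m) c : is_trig_mx T ->
  col c (Y *m T) = T c c *: col c Y + \sum_(l : 'I_m | (c < l)%N) T l c *: col l Y.
Proof.
move=> /is_trig_mxP T_trig.
have -> : col c (Y *m T) = \sum_l T l c *: col l Y.
  by apply/colP => r; rewrite !mxE summxE; apply: eq_bigr => l _; rewrite !mxE mulrC.
rewrite (bigD1 c) //=; congr (_ + _); rewrite big_mkcond [RHS]big_mkcond.
apply: eq_bigr => l _ /=; case: (ltngtP c l) => [c_lt_l | l_lt_c | /val_inj ->].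
- by rewrite -val_eqE /= gtn_eqF.
- by rewrite T_trig // scale0r; case: ifP.
- by rewrite eqxx.
Qed.

(* the matrix recursion Y(k+1) = A Y(k) + P Y(k) T, T lower triangular, is a
   cascade of column recursions driven by the later columns; it is stable when
   every A + T_jj P is *)
Lemma trig_cascade n m (A P : 'M[F]_n) (T : 'M[F]_m) (Y : nat -> 'M[F]_(n, m)) :
  is_trig_mx T -> (forall j, schur_stable (A + T j j *: P)) ->
  (forall k, Y k.+1 = A *m Y k + P *m Y k *m T) -> mx_tends_to_0 Y.
Proof.
move=> T_trig stable rec.
have col_rec c k : col c (Y k.+1) = (A + T c c *: P) *m col c (Y k)
    + P *m \sum_(l : 'I_m | (c < l)%N) T l c *: col l (Y k).
  rewrite rec linearD /= col_mull -mulmxA col_mull col_mul_trig //.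
  by rewrite !mulmxDr mulmxDl addrA -scalemxAl -scalemxAr.
have col_null d (c : 'I_m) : (m - c <= d)%N -> mx_tends_to_0 (fun k => col c (Y k)).
  elim: d c => [|d IH] c c_le; first by move: c_le; rewrite leqn0 subn_eq0 leqNgt ltn_ord.
  apply: (stable_input (stable c) (col_rec c)); apply: mx_tends_to_0_mull => a b.
  apply: tends_to_0_ext (tends_to_0_sum (index_enum _) (P := fun l : 'I_m => (c < l)%N)
    (a := fun l k => T l c * col l (Y k) a b) _) => [k|l c_lt_l].
    by rewrite summxE; apply: eq_bigr => l _; rewrite !mxE.
  apply/tends_to_0_scale/IH.
  by rewrite -ltnS (leq_trans _ c_le) // ltn_sub2l.
by apply: mx_tends_to_0_cols => c; apply: (col_null m); apply: leq_subr.
Qed.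

Lemma sylvester_cascade n m (A P : 'M[F]_n) (J : 'M[F]_m) (Y : nat -> 'M[F]_(n, m)) :
  (forall mu, eigenvalue J mu -> schur_stable (A + mu *: P)) ->
  (forall k, Y k.+1 = A *m Y k + P *m Y k *m J) -> mx_tends_to_0 Y.
Proof.
case: m J Y => [|m] J Y stable rec; first by move=> a [].
have [Q Q_unitary T_trig] := Schur J (ltn0Sn m).
have Q_unit : Q \in unitmx by apply: unitarymx_unit.
suff hYQ : mx_tends_to_0 (fun k => Y k *m invmx Q).
  by apply: mx_tends_to_0_ext (mx_tends_to_0_mulr Q hYQ) => k; rewrite mulmxKV.
apply: (trig_cascade T_trig) => [j|k]; first exact/stable/trig_diag_eigenvalue.
by rewrite rec conjumx // mulmxDl -!mulmxA mulKmx.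
Qed.

End TriangularCascade.

Section StochasticFixedVectors.
Variable F : numClosedFieldType.

(* positivity of a nonnegative left fixed vector of D propagates backwards
   along the edges of the graph, hence reaches the root of a spanning tree *)
Lemma fixed_vector_pos_root N (D : 'M[F]_N) (r : 'I_N) (p : 'rV[F]_N) :
  (forall i j, 0 <= D i j) -> (forall i, connect (graph_edge D) r i) ->
  (forall i, 0 <= p 0 i) -> p *m D = p -> forall i0, 0 < p 0 i0 -> 0 < p 0 r.
Proof.
move=> D_ge0 r_root p_ge0 pD i0 p_i0.
have back j i : graph_edge D j i -> 0 < p 0 i -> 0 < p 0 j.
  move=> /andP[_ D_ij] p_i; rewrite lt_def p_ge0 andbT; apply/negP => /eqP p_j.
  have pD_j : \sum_k p 0 k * D k j = 0 by move: p_j; rewrite -{1}pD mxE.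
  have /eqP := psumr_eq0P (fun k _ => mulr_ge0 (p_ge0 k) (D_ge0 k j)) pD_j (i := i) isT.
  by rewrite mulf_eq0 (gt_eqF p_i) (gt_eqF D_ij).
have /connectP [s path_s i0_last] := r_root i0; rewrite i0_last in p_i0; clear i0_last r_root.
elim: s r path_s p_i0 => [|y s IH] x //= /andP[xy path_s] p_last.
exact: back x y xy (IH y path_s p_last).
Qed.

Lemma nonneg_sum_pos N (p : 'rV[F]_N) :
  (forall i, 0 <= p 0 i) -> 0 < \sum_i p 0 i -> exists i, 0 < p 0 i.
Proof.
move=> p_ge0 sum_gt0; have [/existsP//|/existsPn p_le0] := boolP [exists i, 0 < p 0 i].
suff : \sum_i p 0 i = 0 by move=> sum0; rewrite sum0 ltxx in sum_gt0.
apply: big1 => i _; apply/eqP; rewrite eq_le p_ge0 andbT.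
by rewrite real_leNgt ?p_le0 ?real0 ?ger0_real.
Qed.

(* With u = |w|, both u + w and u - w
   are nonnegative fixed vectors, positive at the root unless zero, while
   (u + w)(u - w) = 0 there. *)
Lemma real_fixed_vector_sum0 N (D : 'M[F]_N) : in_Gamma D -> forall w : 'rV[F]_N,
  (forall i, w 0 i \is Num.real) -> w *m D = w -> \sum_i w 0 i = 0 -> w = 0.
Proof.
move=> [[_ [_ [D_ge0 D_rowsum]]] [r r_root]] w w_real wD w_sum0.
pose u := \row_i `|w 0 i|.
have uD : u *m D = u.
  have u_le j : u 0 j <= (u *m D) 0 j.
    rewrite !mxE -{1}wD mxE; apply: le_trans (ler_norm_sum _ _ _) _.
    by apply: ler_sum => i _; rewrite normrM (ger0_norm (D_ge0 _ _)) mxE.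
  have gap_sum0 : \sum_j ((u *m D) 0 j - u 0 j) = 0.
    apply/eqP; rewrite sumrB subr_eq0; apply/eqP.
    under eq_bigr do rewrite mxE.
    by rewrite exchange_big; apply: eq_bigr => i _; rewrite -mulr_sumr D_rowsum mulr1.
  apply/rowP => j; apply/eqP; rewrite -subr_eq0; apply/eqP.
  by apply: (psumr_eq0P _ gap_sum0) => // k _; rewrite subr_ge0.
pose pp := u + w; pose qq := u - w.
have pp_ge0 i : 0 <= pp 0 i.
  rewrite !mxE -[X in _ + X]opprK subr_ge0 lerNl.
  exact: real_lerNnormlW (w_real i) (lexx _).
have qq_ge0 i : 0 <= qq 0 i by rewrite !mxE subr_ge0 real_ler_norm.
apply/eqP; apply/negPn/negP => w_neq0.
have [i0 w_i0] : exists i, w 0 i != 0.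
  have [/existsP//|/existsPn w0] := boolP [exists i, w 0 i != 0].
  by case/eqP: w_neq0; apply/rowP => i; rewrite mxE; apply/eqP/negPn/w0.
have u_sum_gt0 : 0 < \sum_i `|w 0 i|.
  rewrite (bigD1 i0) //= ltr_wpDr ?normr_gt0 //.
  by apply: sumr_ge0.
have [ip p_ip] : exists i, 0 < pp 0 i.
  apply: nonneg_sum_pos pp_ge0 _.
  by under eq_bigr do rewrite !mxE; rewrite big_split /= w_sum0 addr0.
have [iq q_iq] : exists i, 0 < qq 0 i.
  apply: nonneg_sum_pos qq_ge0 _.
  by under eq_bigr do rewrite !mxE; rewrite sumrB w_sum0 subr0.
have ppD : pp *m D = pp by rewrite mulmxDl uD wD.
have qqD : qq *m D = qq by rewrite mulmxBl uD wD.
have := mulr_gt0 (fixed_vector_pos_root D_ge0 r_root pp_ge0 ppD p_ip)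
  (fixed_vector_pos_root D_ge0 r_root qq_ge0 qqD q_iq).
by rewrite !mxE mulrC -subr_sqr real_normK ?w_real // subrr ltxx.
Qed.

(* the same for complex vectors, by splitting into real and imaginary parts *)
Lemma fixed_vector_sum0 N (D : 'M[F]_N) : in_Gamma D -> forall w : 'rV[F]_N,
  w *m D = w -> \sum_i w 0 i = 0 -> w = 0.
Proof.
move=> D_Gamma w wD w_sum0.
have D_real i j : D i j \is Num.real.
  by case: D_Gamma => [[_ [_ [D_ge0 _]]] _]; apply: ger0_real.
have re0 : map_mx (fun z => 'Re z) w = 0.
  apply: (real_fixed_vector_sum0 D_Gamma) => [i||]; first by rewrite mxE Creal_Re.
    apply/rowP => j; rewrite !mxE -{2}wD mxE raddf_sum; apply: eq_bigr => i _.
    by rewrite mxE; exact: (esym (ReMr (D_real i j) _)).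
  by under eq_bigr do rewrite mxE; rewrite -raddf_sum w_sum0 raddf0.
have im0 : map_mx (fun z => 'Im z) w = 0.
  apply: (real_fixed_vector_sum0 D_Gamma) => [i||]; first by rewrite mxE Creal_Im.
    apply/rowP => j; rewrite !mxE -{2}wD mxE raddf_sum; apply: eq_bigr => i _.
    by rewrite mxE [w 0 i * _]mulrC [_ * D i j]mulrC; exact: (esym (ImMl (D_real i j) _)).
  by under eq_bigr do rewrite mxE; rewrite -raddf_sum w_sum0 raddf0.
apply/rowP => i; rewrite [w 0 i]Crect.
by move/rowP: re0 => /(_ i); move/rowP: im0 => /(_ i); rewrite !mxE => -> ->; rewrite mulr0 addr0.
Qed.

End StochasticFixedVectors.

Section DisagreementCoordinates.
Variables (F : numClosedFieldType) (m : nat).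

Lemma sum_indicator N (a : 'I_N) : \sum_i (i == a)%:R = 1 :> F.
Proof. by rewrite (bigD1 a) //= eqxx big1 ?addr0 // => i /negbTE ->. Qed.

(* column l of W is e_(lift l) - e_last: a basis of the zero-sum vectors,
   i.e. of the disagreements between the N = m + 1 agents *)
Definition disagreement_basis : 'M[F]_(m.+1, m) :=
  \matrix_(i, l) ((i == lift ord_max l)%:R - (i == ord_max)%:R).
Local Notation W := disagreement_basis.

Lemma disagreement_basis_colsum l : \sum_i W i l = 0.
Proof. by under eq_bigr do rewrite mxE; rewrite sumrB !sum_indicator subrr. Qed.

Lemma disagreement_basis_lift s (b : 'M[F]_(m, s)) l c : (W *m b) (lift ord_max l) c = b l c.
Proof.
rewrite mxE (bigD1 l) //= !mxE eqxx eq_sym (negbTE (neq_lift _ _)) subr0 mul1r.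
rewrite big1 ?addr0 // => l' l'_neq_l; rewrite !mxE (inj_eq lift_inj) eq_sym.
by rewrite (negbTE l'_neq_l) eq_sym (negbTE (neq_lift _ _)) subrr mul0r.
Qed.

(* coordinates of a vector in the basis W: forget the last entry *)
Definition drop_last (w : 'cV[F]_m.+1) : 'cV[F]_m := \col_l w (lift ord_max l) 0.

Lemma disagreement_basis_span (w : 'cV[F]_m.+1) :
  \sum_i w i 0 = 0 -> W *m drop_last w = w.
Proof.
move=> w_sum0; apply/colP => i; case: (unliftP ord_max i) => [l ->|->].
  by rewrite disagreement_basis_lift mxE.
rewrite mxE; under eq_bigr do rewrite !mxE (negbTE (neq_lift _ _)) eqxx sub0r mulN1r.
move/eqP: w_sum0; rewrite (bigD1_ord ord_max) //= addr_eq0 => /eqP ->.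
by rewrite sumrN.
Qed.

(* the matrix of Q restricted to the zero-sum subspace, in the basis W *)
Definition reduced_mx (Q : 'M[F]_m.+1) : 'M[F]_m :=
  \matrix_(l', l) (Q *m W) (lift ord_max l') l.

Lemma reduced_mxP (Q : 'M[F]_m.+1) :
  (forall j, \sum_i Q i j = 0) -> Q *m W = W *m reduced_mx Q.
Proof.
move=> Q_colsum; apply/matrixP => i l.
have colsum0 : \sum_i0 col l (Q *m W) i0 0 = 0.
  under eq_bigr do rewrite !mxE; rewrite exchange_big big1 // => j _.
  by rewrite -mulr_suml Q_colsum mul0r.
have := disagreement_basis_span colsum0; move/colP => /(_ i); rewrite !mxE => <-.
by apply: eq_bigr => l' _; rewrite !mxE.
Qed.

Lemma eigenvalue_tr n (M : 'M[F]_n) a : eigenvalue M a -> eigenvalue M^T a.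
Proof.
rewrite /eigenvalue /eigenspace -!mxrank_eq0 !mxrank_ker.
have -> : M^T - a%:M = (M - a%:M)^T by rewrite linearB /= tr_scalar_mx.
by rewrite mxrank_tr.
Qed.

Lemma reduced_mx_eigenvector (Q : 'M[F]_m.+1) mu :
  (forall j, \sum_i Q i j = 0) -> eigenvalue (reduced_mx Q) mu ->
  exists2 w : 'cV[F]_m.+1, w != 0 & Q *m w = mu *: w /\ \sum_i w i 0 = 0.
Proof.
move=> Q_colsum /eigenvalue_tr /eigenvalueP [a aQ a_neq0].
have Qa : reduced_mx Q *m a^T = mu *: a^T.
  by rewrite -[reduced_mx Q]trmxK -trmx_mul aQ linearZ.
exists (W *m a^T); last split.
- apply: contra a_neq0 => /eqP Wa0; apply/eqP/rowP => l.
  by move: (disagreement_basis_lift a^T l 0); rewrite Wa0 !mxE => <-.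
- by rewrite mulmxA reduced_mxP // -mulmxA Qa scalemxAr.
- under eq_bigr do rewrite mxE; rewrite exchange_big big1 // => l _.
  by rewrite -mulr_suml disagreement_basis_colsum mul0r.
Qed.

Lemma laplacian_colsum (D : 'M[F]_m.+1) :
  (forall i, \sum_j D i j = 1) -> forall j, \sum_i (1%:M - D^T) i j = 0.
Proof.
by move=> D_rowsum j; under eq_bigr do rewrite !mxE; rewrite sumrB sum_indicator D_rowsum subrr.
Qed.

Lemma reduced_laplacian_spectrum (D : 'M[F]_m.+1) mu : in_Gamma D ->
  eigenvalue (reduced_mx (1%:M - D^T)) mu -> eigenvalue D (1 - mu) /\ 1 - mu != 1.
Proof.
move=> D_Gamma; have [[_ [_ [_ D_rowsum]]] _] := D_Gamma.
case/(reduced_mx_eigenvector (laplacian_colsum D_rowsum)) => w w_neq0 [Lw w_sum0].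
have wD : w^T *m D = (1 - mu) *: w^T.
  rewrite -[D]trmxK -trmx_mul -linearZ; congr (_^T).
  by rewrite -[D^T](subKr 1%:M) mulmxBl mul1mx Lw scalerBl scale1r.
split; first by apply/eigenvalueP; exists w^T; rewrite ?trmx_eq0.
apply: contra w_neq0 => /eqP mu0; rewrite -trmx_eq0; apply/eqP.
apply: (fixed_vector_sum0 D_Gamma); first by rewrite wD mu0 scale1r.
by under eq_bigr do rewrite mxE.
Qed.

End DisagreementCoordinates.

Section StackedColumns.
Variable F : numClosedFieldType.

Lemma sum_indicator_scale n N (g : 'I_N -> 'cV[F]_n) i :
  \sum_j (j == i)%:R *: g j = g i.
Proof. by rewrite (bigD1 i) //= eqxx scale1r big1 ?addr0 // => j /negbTE ->; rewrite scale0r. Qed.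

Definition stack_cols n N (g : 'I_N -> 'cV[F]_n) : 'M[F]_(n, N) := \matrix_(r, i) g i r 0.

Lemma eq_stack_cols n N (f g : 'I_N -> 'cV[F]_n) :
  (forall i, f i = g i) -> stack_cols f = stack_cols g.
Proof. by move=> fg; apply/matrixP => r i; rewrite !mxE fg. Qed.

Lemma mul_stack_cols r n N (M : 'M[F]_(r, n)) (g : 'I_N -> 'cV[F]_n) :
  M *m stack_cols g = stack_cols (fun i => M *m g i).
Proof. by apply/matrixP => a i; rewrite !mxE; apply: eq_bigr => j _; rewrite mxE. Qed.

Lemma stack_colsD n N (f g : 'I_N -> 'cV[F]_n) :
  stack_cols (fun i => f i + g i) = stack_cols f + stack_cols g.
Proof. by apply/matrixP => a i; rewrite !mxE. Qed.

Lemma stack_colsB n N (f g : 'I_N -> 'cV[F]_n) :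
  stack_cols (fun i => f i - g i) = stack_cols f - stack_cols g.
Proof. by apply/matrixP => a i; rewrite !mxE. Qed.

Lemma stack_cols_comb n N s (g : 'I_N -> 'cV[F]_n) (Q : 'M[F]_(N, s)) :
  stack_cols g *m Q = stack_cols (fun l => \sum_j Q j l *: g j).
Proof.
by apply/matrixP => a l; rewrite !mxE summxE; apply: eq_bigr => j _; rewrite !mxE mulrC.
Qed.

Lemma stack_cols_vec n N (g : 'I_N -> 'cV[F]_n) (w : 'cV[F]_N) :
  stack_cols g *m w = \sum_i w i 0 *: g i.
Proof. by apply/colP => a; rewrite stack_cols_comb !mxE. Qed.

Variables (n m : nat).
Local Notation W := (disagreement_basis F m).

Lemma stack_cols_disagreement (g : 'I_m.+1 -> 'cV[F]_n) :
  stack_cols g *m W = stack_cols (fun l => g (lift ord_max l) - g ord_max).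
Proof.
apply/matrixP => a l; rewrite stack_cols_comb /stack_cols [in LHS]mxE [in RHS]mxE.
suff -> : \sum_j W j l *: g j = g (lift ord_max l) - g ord_max by [].
under eq_bigr do rewrite mxE scalerBl.
by rewrite sumrB !sum_indicator_scale.
Qed.

(* the difference of the columns i and j, read off the disagreements *)
Definition pair_coords (i j : 'I_m.+1) : 'cV[F]_m :=
  drop_last (\col_r ((r == i)%:R - (r == j)%:R)).

Lemma stack_cols_pair (g : 'I_m.+1 -> 'cV[F]_n) i j :
  g i - g j = stack_cols g *m W *m pair_coords i j.
Proof.
rewrite -mulmxA disagreement_basis_span; last first.
  by under eq_bigr do rewrite mxE; rewrite sumrB !sum_indicator subrr.
rewrite stack_cols_vec; under eq_bigr do rewrite mxE scalerBl.
by rewrite sumrB !sum_indicator_scale.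
Qed.

End StackedColumns.

Section FormationProtocol.
Variables (F : numClosedFieldType) (n p q m : nat).
Variables (A : 'M[F]_n) (B : 'M[F]_(n, p)) (C : 'M[F]_(q, n)).
Variables (K : 'M[F]_(p, n)) (L : 'M[F]_(n, q)) (D : 'M[F]_m.+1).
Variables (h : 'I_m.+1 -> 'cV[F]_n) (x v : nat -> 'I_m.+1 -> 'cV[F]_n).
Variable u : nat -> 'I_m.+1 -> 'cV[F]_p.
Hypothesis D_rowsum : forall i, \sum_j D i j = 1.
Hypothesis formation : forall i j, (A - 1%:M) *m (h i - h j) = 0.
Hypothesis control : forall k i, u k i = K *m v k i.
Hypothesis agent : forall k i, x k.+1 i = A *m x k i + B *m u k i.
Hypothesis observer : forall k i, v k.+1 i =
  (A + B *m K) *m v k i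
  + L *m (\sum_j D i j *: (C *m (v k i - v k j))
          - \sum_j D i j *: (C *m x k i - C *m x k j - C *m (h i - h j))).

Local Notation track k i := (x k i - h i).
Local Notation obs_err k i := (v k i - (x k i - h i)).

Lemma laplacian_comb (g : 'I_m.+1 -> 'cV[F]_n) i :
  \sum_j D i j *: (g i - g j) = \sum_j (1%:M - D^T) j i *: g j.
Proof.
under [RHS]eq_bigr do rewrite !mxE scalerBl.
under [LHS]eq_bigr do rewrite scalerBr.
by rewrite !sumrB sum_indicator_scale -scaler_suml D_rowsum scale1r.
Qed.

Lemma tracking_step k i :
  track k.+1 i = (A + B *m K) *m track k i + B *m K *m obs_err k i + (A - 1%:M) *m h i.
Proof.
rewrite agent control mulmxA !(mulmxDl, mulmxBl, mulmxBr, mulmxDr) mulNmx mul1mx.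
move: (A *m x k i) (A *m h i) (B *m K *m x k i) (B *m K *m h i) (B *m K *m v k i) (h i).
by move=> *; apply/matrixP => r s; rewrite !mxE; ring.
Qed.

Lemma observer_error_step k i :
  obs_err k.+1 i = A *m obs_err k i
    + L *m C *m (\sum_j (1%:M - D^T) j i *: obs_err k j) - (A - 1%:M) *m h i.
Proof.
have consensus_term : \sum_j D i j *: (C *m (v k i - v k j))
    - \sum_j D i j *: (C *m x k i - C *m x k j - C *m (h i - h j))
    = C *m \sum_j D i j *: (obs_err k i - obs_err k j).
  rewrite -sumrB mulmx_sumr; apply: eq_bigr => j _; rewrite -scalerBr -scalemxAr.
  congr (_ *: _); rewrite !mulmxBr.
  move: (C *m v k i) (C *m v k j) (C *m x k i) (C *m x k j) (C *m h i) (C *m h j).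
  by move=> *; apply/matrixP => r s; rewrite !mxE; ring.
rewrite observer consensus_term agent control laplacian_comb mulmxA.
move: (\sum_j _) => S; rewrite !(mulmxDl, mulmxBl, mulmxBr, mulmxDr) !mulmxA mulNmx mul1mx.
move: (A *m v k i) (B *m K *m v k i) (L *m C *m S) (A *m x k i) (A *m h i) (h i).
by move=> *; apply/matrixP => r s; rewrite !mxE; ring.
Qed.

Local Notation W := (disagreement_basis F m).

Lemma disagreement_dynamics :
  let Z k := stack_cols (fun i => obs_err k i) *m W in
  let X k := stack_cols (fun i => track k i) *m W in
  (forall k, Z k.+1 = A *m Z k + L *m C *m Z k *m reduced_mx (1%:M - D^T)) /\
  (forall k, X k.+1 = (A + B *m K) *m X k + B *m K *m Z k).
Proof.
have drift0 : stack_cols (fun i => (A - 1%:M) *m h i) *m W = 0.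
  rewrite stack_cols_disagreement (eq_stack_cols (g := fun _ => 0)) => [|l].
    by apply/matrixP => r l; rewrite !mxE.
  by rewrite -mulmxBr formation.
split=> k.
  rewrite (eq_stack_cols (observer_error_step k)) [in LHS]stack_colsB [in LHS]stack_colsD.
  rewrite mulmxBl drift0 subr0 mulmxDl -!mul_stack_cols -stack_cols_comb.
  by rewrite -!mulmxA reduced_mxP //; apply: laplacian_colsum.
rewrite (eq_stack_cols (tracking_step k)) [in LHS]stack_colsD [in LHS]stack_colsD.
by rewrite !mulmxDl drift0 addr0 -!mul_stack_cols !mulmxA !mulmxDl.
Qed.

End FormationProtocol.

Theorem theorem5 (F : archiClosedFieldType) (N n p q : nat)
  (A : 'M[F]_n) (B : 'M[F]_(n, p)) (C : 'M[F]_(q, n))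
  (K : 'M[F]_(p, n)) (L : 'M[F]_(n, q)) (D : 'M[F]_N)
  (h : 'I_N -> 'cV[F]_n) :
  real_mx A -> real_mx B -> real_mx C -> real_mx K -> real_mx L ->
  (forall i, real_mx (h i)) ->
  in_Gamma D ->
  schur_stable (A + B *m K) ->
  (forall lam : F, eigenvalue D lam -> lam != 1 ->
     schur_stable (A + (1 - lam) *: (L *m C))) ->
  (forall i j, (A - 1%:M) *m (h i - h j) = 0) ->
  forall (x v : nat -> 'I_N -> 'cV[F]_n) (u : nat -> 'I_N -> 'cV[F]_p),
  (forall i, real_mx (x 0%N i)) -> (forall i, real_mx (v 0%N i)) ->
  (forall k i, u k i = K *m v k i) ->
  (forall k i, x k.+1 i = A *m x k i + B *m u k i) ->
  (forall k i, v k.+1 i =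
     (A + B *m K) *m v k i
     + L *m (\sum_(j < N) D i j *: (C *m (v k i - v k j))
             - \sum_(j < N) D i j *: (C *m x k i - C *m x k j - C *m (h i - h j)))) ->
  forall i j, tends_to_0 (fun k => vnorm (x k i - h i - x k j + h j)).
Proof.
move=> _ _ _ _ _ _ D_Gamma BK_stable LC_stable formation x v u _ _ control agent observer.
move=> i j; case: N => [|m] in D h D_Gamma LC_stable formation x v u control agent observer i j *.
  by case: i.
have [[_ [_ [_ D_rowsum]]] _] := D_Gamma.
have [Z_rec X_rec] := disagreement_dynamics D_rowsum formation control agent observer.
have J_spec mu : eigenvalue (reduced_mx (1%:M - D^T)) mu -> schur_stable (A + mu *: (L *m C)).
  move=> /(reduced_laplacian_spectrum D_Gamma) [eig_D eig_neq1].
  by have := LC_stable _ eig_D eig_neq1; rewrite subKr.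
have Z_null := sylvester_cascade J_spec Z_rec.
have X_null := stable_input BK_stable X_rec (mx_tends_to_0_mull (B *m K) Z_null).
apply: tends_to_0_ext (tends_to_0_vnorm (mx_tends_to_0_mulr (pair_coords F i j) X_null)) => k.
by rewrite -(stack_cols_pair (fun i => x k i - h i)) opprD opprK addrA.
Qed.
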